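(* Let $T$ be a rooted edge-weighted full binary tree with $n$ leaves, all root-to-leaf paths of weight $1$, every edge of weight at least $\tau\frac{\log n}{\sqrt{n}}$ for a sufficiently large constant $\tau$, whose topology is known, with experiment outcomes on all triples of leaves generated by the homogeneous noise model. Let $\mathsf{lc}_r$ be the left child of the root $r$. Then there is a procedure (Compute-light-tree) which, with high probability, computes $h_v$ for all vertices $v$ in the subtree rooted at $\mathsf{lc}_r$, each with additive error $\Theta(\sqrt{\log n/n})$.
   Context: Distances $d$ between leaves are path weights (an ultrametric). For each unordered triple of distinct leaves a single experiment $Q(a,b,c)$ returns one pair, independently across triples, with $\Pr[Q(a,b,c)=(a,b)]=\frac{d(a,c)+d(b,c)}{2(d(a,b)+d(b,c)+d(a,c))}$ (and symmetrically). For a vertex $v$, $h_v$ is the total weight of a path from $v$ to any leaf in its subtree, and $\mathsf{NL}(v)$ is the number of leaves in the subtree rooted at $v$. The children of every internal vertex are ordered as left child $\mathsf{lc}$ and right child $\mathsf{rc}$ with $\mathsf{NL}(\mathsf{rc})\ge\mathsf{NL}(\mathsf{lc})$. ''With high probability'' means probability $1-o(1)$ as $n\to\infty$. *)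

From HB Require Import structures.
From mathcomp Require Import all_boot all_order all_algebra.
From mathcomp Require Import reals exp.
Set Implicit Arguments. Unset Strict Implicit. Unset Printing Implicit Defensive.
Import Order.TTheory GRing.Theory Num.Theory.
Local Open Scope ring_scope.

Section Trees.
Variables (R : realType) (n : nat).

(* Rooted edge-weighted full binary tree with leaves labelled by 'I_n.
   WNode w1 w2 t1 t2 : internal vertex with left child t1 (edge weight w1)
   and right child t2 (edge weight w2). *)
Inductive wtree : Type :=
  | WLeaf of 'I_n
  | WNode of R & R & wtree & wtree.

Inductive btree : Type :=
  | BLeaf of 'I_n
  | BNode of btree & btree.

Fixpoint topology (t : wtree) : btree :=
  match t with
  | WLeaf a => BLeaf a
  | WNode _ _ t1 t2 => BNode (topology t1) (topology t2)
  end.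

Fixpoint leaves (t : wtree) : seq 'I_n :=
  match t with
  | WLeaf a => [:: a]
  | WNode _ _ t1 t2 => leaves t1 ++ leaves t2
  end.

Definition NL (t : wtree) : nat := size (leaves t).

Fixpoint ordered_children (t : wtree) : bool :=
  match t with
  | WLeaf _ => true
  | WNode _ _ t1 t2 => [&& NL t1 <= NL t2, ordered_children t1 & ordered_children t2]%N
  end.

Fixpoint edge_weights (t : wtree) : seq R :=
  match t with
  | WLeaf _ => [::]
  | WNode w1 w2 t1 t2 => w1 :: w2 :: edge_weights t1 ++ edge_weights t2
  end.

Fixpoint path_weights (t : wtree) : seq R :=
  match t with
  | WLeaf _ => [:: 0]
  | WNode w1 w2 t1 t2 =>
      map (fun x => w1 + x) (path_weights t1) ++ map (fun x => w2 + x) (path_weights t2)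
  end.

(* h_v: total weight of a path from v to a leaf of its subtree (the first
   one; under the ultrametric hypothesis all such paths have equal weight). *)
Definition hv (t : wtree) : R := head 0 (path_weights t).

(* vertex addressed by a left(false)/right(true) path from the root *)
Fixpoint subtree_at (t : wtree) (s : seq bool) : option wtree :=
  match s, t with
  | [::], _ => Some t
  | b :: s', WNode _ _ t1 t2 => subtree_at (if b then t2 else t1) s'
  | _ :: _, WLeaf _ => None
  end.

Fixpoint vertices (t : wtree) : seq (seq bool) :=
  match t with
  | WLeaf _ => [:: [::]]
  | WNode _ _ t1 t2 =>
      [::] :: map (cons false) (vertices t1) ++ map (cons true) (vertices t2)
  end.

(* addresses of the vertices of the subtree rooted at lc_r (the left child
   of the root); empty if the root is a leaf *)
Definition lc_vertices (t : wtree) : seq (seq bool) :=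
  match t with
  | WLeaf _ => [::]
  | WNode _ _ t1 _ => map (cons false) (vertices t1)
  end.

(* weight of the path from the root of t to leaf a (0 if a is not a leaf of t) *)
Fixpoint leaf_depth (t : wtree) (a : 'I_n) : R :=
  match t with
  | WLeaf _ => 0
  | WNode w1 w2 t1 t2 =>
      if a \in leaves t1 then w1 + leaf_depth t1 a
      else if a \in leaves t2 then w2 + leaf_depth t2 a else 0
  end.

Fixpoint dist (t : wtree) (a b : 'I_n) : R :=
  if a == b then 0 else
  match t with
  | WLeaf _ => 0
  | WNode w1 w2 t1 t2 =>
      if (a \in leaves t1) && (b \in leaves t1) then dist t1 a b
      else if (a \in leaves t2) && (b \in leaves t2) then dist t2 a b
      else leaf_depth t a + leaf_depth t b
  end.

(* unordered triples of distinct leaves, represented as a < b < c *)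
Definition triple : Type :=
  {t : 'I_n * 'I_n * 'I_n | (t.1.1 < t.1.2)%N && (t.1.2 < t.2)%N}.

(* An outcome of Q(a,b,c) is encoded by k : 'I_3, the element NOT in the
   returned pair: k = 0 -> (b,c), k = 1 -> (a,c), k = 2 -> (a,b). *)
Definition outcomes : Type := {ffun triple -> 'I_3}.

(* Pr[Q(a,b,c) = pair excluding k] in the homogeneous noise model *)
Definition qprob (t : wtree) (tr : triple) (k : 'I_3) : R :=
  let a := (val tr).1.1 in let b := (val tr).1.2 in let c := (val tr).2 in
  let S := dist t a b + dist t b c + dist t a c in
  match val k with
  | 0%N => (dist t b a + dist t c a) / (2 * S)
  | 1%N => (dist t a b + dist t c b) / (2 * S)
  | _   => (dist t a c + dist t b c) / (2 * S)
  end.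

(* independent experiments on all triples: product distribution *)
Definition outcome_prob (t : wtree) (f : outcomes) : R :=
  \prod_(tr : triple) qprob t tr (f tr).

Definition Pr (t : wtree) (E : pred outcomes) : R :=
  \sum_(f : outcomes | E f) outcome_prob t f.

Definition valid_tree (tau : R) (t : wtree) : Prop :=
  [/\ perm_eq (leaves t) (enum 'I_n),
      ordered_children t,
      all (fun x => x == 1) (path_weights t)
    & all (fun w => tau * ln (n%:R) / Num.sqrt (n%:R) <= w) (edge_weights t)].

End Trees.

Arguments WLeaf {R n}.
Arguments BLeaf {n}.

From HB Require Import structures.
From mathcomp Require Import all_boot all_order all_algebra.
From mathcomp Require Import reals sequences exp.
From mathcomp Require Import ring lra zify.
Set Implicit Arguments. Unset Strict Implicit. Unset Printing Implicit Defensive.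
Import Order.TTheory GRing.Theory Num.Theory.
Local Open Scope ring_scope.

(* Fix a vertex u of the subtree of lc_r, with children X and Y, and leaves x of X
   and y of Y.  For every leaf c of rc_r the tree is an ultrametric of height 1, so
   d(x, y) = 2 h_u and d(x, c) = d(y, c) = 2: the experiment on {x, y, c} returns the
   pair (x, y) with probability 4 / (2 (2 h_u + 4)) = 1 / (h_u + 2).  Since
   NL(rc_r) >= n / 2, there are at least n / 2 such independent experiments, and a
   Chernoff bound puts the empirical frequency r of (x, y) within 6 sqrt(log n / n)
   of 1 / (h_u + 2) except with probability 2 n^-2; then 1 / r - 2 estimates h_u
   within 108 sqrt(log n / n).  A union bound over the at most n vertices of the
   subtree of lc_r concludes.  The argument only needs positive edge weights, so
   tau = 1 suffices. *)

Lemma expR_le_quadratic (R : realType) (x : R) :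
  x <= 2^-1 -> expR x <= 1 + x + 2 * x ^+ 2.
Proof.
move=> x_le; have quad_gt0 : 0 < 1 + x + 2 * x ^+ 2 by nra.
(* (1 - x) (1 + x + 2 x^2) = 1 + x^2 (1 - 2 x) >= 1 and 1 - x <= expR (- x) *)
rewrite -[expR x]invrK -expRN -[X in _ <= X]invrK.
rewrite lef_pV2 ?posrE ?expR_gt0 ?invr_gt0 //.
apply: le_trans (expR_ge1Dx (- x)).
by rewrite -(@ler_pM2r _ (1 + x + 2 * x ^+ 2)) // mulVf ?gt_eqF //; nra.
Qed.

Section ProductProbability.
Variables (R : realType) (I J : finType) (q : I -> J -> R).
Hypothesis q_ge0 : forall i j, 0 <= q i j.
Hypothesis q_sum1 : forall i, \sum_j q i j = 1.

Definition prodw (f : {ffun I -> J}) : R := \prod_i q i (f i).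

Definition prob (E : pred {ffun I -> J}) : R := \sum_(f | E f) prodw f.

Lemma prodw_ge0 f : 0 <= prodw f.
Proof. by apply: prodr_ge0 => i _; apply: q_ge0. Qed.

Lemma sum_prodw_prod (G : I -> J -> R) :
  \sum_f prodw f * \prod_i G i (f i) = \prod_i \sum_j q i j * G i j.
Proof.
rewrite (bigA_distr_bigA (fun i j => q i j * G i j)).
by apply: eq_bigr => f _; rewrite -big_split.
Qed.

Lemma sum_prodw : \sum_f prodw f = 1.
Proof.
transitivity (\sum_f prodw f * \prod_(i : I) (fun _ _ => 1 : R) i (f i)).
  by apply: eq_bigr => f _; rewrite big1_eq mulr1.
rewrite (sum_prodw_prod (fun _ _ => 1)); apply: big1 => i _.
by under eq_bigr do rewrite mulr1.
Qed.

Lemma probNE (E : pred {ffun I -> J}) : prob E = 1 - prob (fun f => ~~ E f).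
Proof. by rewrite /prob -sum_prodw (bigID E predT) addrK. Qed.

Lemma prob_le (E E' : pred {ffun I -> J}) :
  (forall f, E f -> E' f) -> prob E <= prob E'.
Proof.
move=> sub; rewrite /prob [leLHS]big_mkcond [leRHS]big_mkcond.
apply: ler_sum => f _; case Ef: (E f); first by rewrite (sub f Ef).
by case: (E' f); rewrite ?prodw_ge0.
Qed.

Lemma probU_le (E1 E2 : pred {ffun I -> J}) :
  prob (fun f => E1 f || E2 f) <= prob E1 + prob E2.
Proof.
rewrite /prob big_mkcond (big_mkcond E1) (big_mkcond E2) -big_split /=.
apply: ler_sum => f _; have := prodw_ge0 f.
by case: (E1 f); case: (E2 f) => /=; lra.
Qed.

Lemma prob_all_ge (S : Type) (P : S -> pred {ffun I -> J}) (l : seq S) :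
  1 - \sum_(s <- l) prob (fun f => ~~ P s f) <= prob (fun f => all (P^~ f) l).
Proof.
rewrite probNE lerD2l lerN2; elim: l => [|s l IH].
  by rewrite big_nil /prob big_pred0.
rewrite big_cons; apply: le_trans (lerD (lexx _) IH).
by apply: le_trans (probU_le _ _); apply: prob_le => f /=; rewrite negb_and.
Qed.

Lemma centered_mgf_le i (Y : J -> R) (l : R) :
  (forall j, -1 <= Y j <= 1) -> \sum_j q i j * Y j = 0 -> 0 <= l <= 2^-1 ->
  \sum_j q i j * expR (l * Y j) <= expR (2 * l ^+ 2).
Proof.
move=> Y_bd Y_mean l_bd.
apply: le_trans (expR_ge1Dx _).
have -> : 1 + 2 * l ^+ 2 = \sum_j q i j * (1 + l * Y j + 2 * l ^+ 2).
  under eq_bigr do rewrite !mulrDr mulrCA.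
  by rewrite !big_split /= -!mulr_sumr -!mulr_suml Y_mean q_sum1; ring.
apply: ler_sum => j _; apply: ler_wpM2l => //.
have /andP [Y_ge Y_le] := Y_bd j.
apply: le_trans (expR_le_quadratic _) _; first by nra.
by rewrite lerD2l ler_wpM2l // exprMn ler_piMr ?sqr_ge0 //; nra.
Qed.

Lemma chernoff_upper (A : {set I}) (Y : I -> J -> R) (t : R) :
  (forall i j, -1 <= Y i j <= 1) ->
  (forall i, i \in A -> \sum_j q i j * Y i j = 0) -> 0 <= t <= 2 ->
  prob (fun f => #|A|%:R * t <= \sum_(i in A) Y i (f i))
    <= expR (- (#|A|%:R * t ^+ 2 / 8)).
Proof.
move=> Y_bd Y_mean t_bd; set m : R := #|A|%:R; pose l := t / 4.
pose G i j := if i \in A then expR (l * Y i j) else 1.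
have G_ge0 i j : 0 <= G i j by rewrite /G; case: ifP; rewrite ?expR_ge0.
have prodG f : \prod_i G i (f i) = expR (l * \sum_(i in A) Y i (f i)).
  rewrite mulr_sumr expR_sum [RHS]big_mkcond.
  by apply: eq_bigr => i _; rewrite /G; case: ifP.
(* exponential Markov inequality, then independence *)
apply: (@le_trans _ _ (\sum_f prodw f * (expR (- (l * m * t)) * \prod_i G i (f i)))).
  rewrite /prob big_mkcond /=; apply: ler_sum => f _; case: ifP => mt_le; last first.
    by rewrite !mulr_ge0 ?prodw_ge0 ?expR_ge0 ?prodr_ge0.
  rewrite -[leLHS]mulr1 ler_wpM2l ?prodw_ge0 // prodG -expRD.
  by apply: le_trans (expR_ge1Dx _); rewrite lerDl /l; nra.
under eq_bigr do rewrite mulrCA.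
rewrite -mulr_sumr sum_prodw_prod.
apply: (@le_trans _ _ (expR (- (l * m * t)) * expR (2 * l ^+ 2) ^+ #|A|)).
  rewrite ler_wpM2l ?expR_ge0 // -prodr_const [leRHS]big_mkcond /=.
  apply: ler_prod => i _; apply/andP; split.
    by apply: sumr_ge0 => j _; rewrite mulr_ge0.
  rewrite /G; case: ifP => iA.
    apply: centered_mgf_le; [exact: Y_bd | exact: Y_mean | ].
    by apply/andP; split; rewrite /l; lra.
  by rewrite -[leRHS](q_sum1 i); under eq_bigr do rewrite mulr1.
rewrite -expRM_natl -expRD ler_expR -/m le_eqVlt; apply/orP; left.
by apply/eqP; rewrite /l; field.
Qed.

Lemma chernoff (A : {set I}) (Y : I -> J -> R) (t : R) :
  (forall i j, -1 <= Y i j <= 1) ->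
  (forall i, i \in A -> \sum_j q i j * Y i j = 0) -> 0 <= t <= 2 ->
  prob (fun f => #|A|%:R * t <= `|\sum_(i in A) Y i (f i)|)
    <= 2 * expR (- (#|A|%:R * t ^+ 2 / 8)).
Proof.
move=> Y_bd Y_mean t_bd.
have NY_bd i j : -1 <= - Y i j <= 1 by have := Y_bd i j; lra.
have NY_mean i : i \in A -> \sum_j q i j * - Y i j = 0.
  by move=> iA; under eq_bigr do rewrite mulrN; rewrite sumrN Y_mean ?oppr0.
apply: (@le_trans _ _ (prob (fun f => #|A|%:R * t <= \sum_(i in A) Y i (f i))
  + prob (fun f => #|A|%:R * t <= \sum_(i in A) - Y i (f i)))).
  apply: le_trans (probU_le _ _); apply: prob_le => f.
  by rewrite ler_normr sumrN.
rewrite mulr2n mulrDl mul1r.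
by apply: lerD; [exact: chernoff_upper Y_bd Y_mean t_bd
               | exact: chernoff_upper NY_bd NY_mean t_bd].
Qed.

End ProductProbability.

Section WeightedTrees.
Variables (R : realType) (n : nat).
Implicit Types (t u : wtree R n) (a b : 'I_n) (s : seq bool) (h : R).

Lemma subtree_leaves t s u : subtree_at t s = Some u -> {subset leaves u <= leaves t}.
Proof.
elim: s t => [|[] s IH] [a|w1 w2 t1 t2] //= => [[<-]|[<-]|/IH sub|/IH sub] //;
  by move=> c /sub; rewrite mem_cat => ->; rewrite ?orbT.
Qed.

Lemma subtree_uniq t s u : subtree_at t s = Some u -> uniq (leaves t) -> uniq (leaves u).
Proof.
elim: s t => [|[] s IH] [a|w1 w2 t1 t2] //= => [[<-]|[<-]|/IH sub|/IH sub] //;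
  by rewrite cat_uniq => /and3P [u1 _ u2]; apply: sub.
Qed.

Lemma dist_xx t a : dist t a a = 0.
Proof. by case: t => [c|w1 w2 t1 t2] /=; rewrite eqxx. Qed.

Lemma dist_sym t a b : dist t a b = dist t b a.
Proof.
elim: t => [c|w1 w2 t1 IH1 t2 IH2] /=; rewrite eq_sym; case: eqP => // _.
rewrite IH1 IH2; case: (a \in leaves t1); case: (b \in leaves t1) => //=;
  by case: (a \in leaves t2); case: (b \in leaves t2) => //=; rewrite addrC.
Qed.

Lemma dist_node_across w1 w2 t1 t2 a b :
  uniq (leaves t1 ++ leaves t2) -> a \in leaves t1 -> b \in leaves t2 ->
  dist (WNode w1 w2 t1 t2) a b =
    leaf_depth (WNode w1 w2 t1 t2) a + leaf_depth (WNode w1 w2 t1 t2) b.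
Proof.
rewrite cat_uniq => /and3P [_ /hasPn disj _] a1 b2.
have b1 : b \notin leaves t1 := disj b b2.
have a2 : a \notin leaves t2 by apply: contraL a1 => /disj.
have ab : a != b by apply: contraNneq b1 => <-.
by rewrite /= (negbTE ab) (negbTE b1) (negbTE a2) andbF.
Qed.

Lemma dist_subtree t s u a b : subtree_at t s = Some u -> uniq (leaves t) ->
  a \in leaves u -> b \in leaves u -> dist t a b = dist u a b.
Proof.
have [->|ab] := eqVneq a b; first by rewrite !dist_xx.
elim: s t => [|c s IH] [x|w1 w2 t1 t2] //= => [[<-] //|[<-] //|su uniq_t au bu].
rewrite (negbTE ab); have := uniq_t; rewrite cat_uniq => /and3P [u1 /hasPn disj u2].
have [sub_u uniq_u] := (subtree_leaves su, subtree_uniq su).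
case: c su sub_u uniq_u => su sub_u uniq_u; last first.
  by rewrite !sub_u //=; apply: IH.
have a2 := sub_u a au; rewrite (negbTE (disj a a2)) a2 sub_u //=.
exact: IH.
Qed.

Definition equidistant t h : bool := all (eq_op^~ h) (path_weights t).

Lemma equidistant_node w1 w2 t1 t2 h : equidistant (WNode w1 w2 t1 t2) h ->
  equidistant t1 (h - w1) /\ equidistant t2 (h - w2).
Proof.
rewrite /equidistant /= all_cat !all_map => /andP [e1 e2].
by split; [apply: sub_all e1 | apply: sub_all e2] => x /eqP <- /=; rewrite addrC addKr.
Qed.

Lemma hv_equidistant t h : equidistant t h -> hv t = h.
Proof.
suff hv_mem : hv t \in path_weights t by move=> /allP /(_ _ hv_mem) /eqP.
rewrite /hv; elim: t => [a|w1 w2 t1 + t2 _] //=; first exact: mem_head.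
by case: (path_weights t1) => //= x s _; rewrite mem_head.
Qed.

Lemma leaf_depth_equidistant t h a : equidistant t h -> a \in leaves t ->
  leaf_depth t a = h.
Proof.
elim: t h => [c|w1 w2 t1 IH1 t2 IH2] h; first by rewrite /equidistant /= andbT => /eqP.
move=> /equidistant_node [e1 e2] /=; rewrite mem_cat.
case: ifP => [a1 _|_ /= a2]; first by rewrite (IH1 _ e1 a1) addrC subrK.
by rewrite a2 (IH2 _ e2 a2) addrC subrK.
Qed.

Lemma equidistant_subtree t s u h : subtree_at t s = Some u ->
  equidistant t h -> equidistant u (hv u).
Proof.
elim: s t h => [|[] s IH] [a|w1 w2 t1 t2] h //= => [[<-]|[<-]|su|su] => [eq|eq||].
- by rewrite (hv_equidistant eq).
- by rewrite (hv_equidistant eq).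
- by case/equidistant_node => _ /(IH _ _ su).
- by case/equidistant_node => /(IH _ _ su).
Qed.

Lemma hv_subtree_le t s u h : all (>= 0) (edge_weights t) ->
  equidistant t h -> subtree_at t s = Some u -> hv u <= h.
Proof.
elim: s t h => [|[] s IH] [a|w1 w2 t1 t2] h //= => [_ eq [<-]|_ eq [<-]||];
  rewrite ?(hv_equidistant eq) //.
- move=> /and3P [_ w2_ge0]; rewrite all_cat => /andP [_ e2].
  by case/equidistant_node => _ eq2 /(IH _ _ e2 eq2); lra.
- move=> /and3P [w1_ge0 _]; rewrite all_cat => /andP [e1 _].
  by case/equidistant_node => eq1 _ /(IH _ _ e1 eq1); lra.
Qed.

Lemma dist_split t s v1 v2 x y h a b : subtree_at t s = Some (WNode v1 v2 x y) ->
  uniq (leaves t) -> equidistant t h -> a \in leaves x -> b \in leaves y ->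
  dist t a b = 2 * hv (WNode v1 v2 x y).
Proof.
move=> su uniq_t eq ax yb.
have uniq_u := subtree_uniq su uniq_t; have eq_u := equidistant_subtree su eq.
have [au bu] : a \in leaves (WNode v1 v2 x y) /\ b \in leaves (WNode v1 v2 x y).
  by rewrite /= !mem_cat ax yb orbT.
rewrite (dist_subtree su uniq_t au bu) dist_node_across //.
by rewrite !(leaf_depth_equidistant eq_u) // mulr2n mulrDl mul1r.
Qed.

Lemma leaf_depth_ge0 t a : all (>= 0) (edge_weights t) -> 0 <= leaf_depth t a.
Proof.
elim: t => [c|w1 w2 t1 IH1 t2 IH2] //= /and3P [w1_ge0 w2_ge0].
rewrite all_cat => /andP [/IH1 ld1 /IH2 ld2].
by case: ifP => _; [|case: ifP => _]; rewrite ?addr_ge0.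
Qed.

Lemma dist_ge0 t a b : all (>= 0) (edge_weights t) -> 0 <= dist t a b.
Proof.
elim: t => [c|w1 w2 t1 IH1 t2 IH2] /=; first by case: eqP.
move=> e; have [_ _ e12] := and3P e; move: e12; rewrite all_cat => /andP [/IH1 d1 /IH2 d2].
case: eqP => // _; case: ifP => _ //; case: ifP => _ //.
by apply: addr_ge0; [exact: (@leaf_depth_ge0 (WNode w1 w2 t1 t2) a e)
                     | exact: (@leaf_depth_ge0 (WNode w1 w2 t1 t2) b e)].
Qed.

Lemma dist_gt0 t a b : all (> 0) (edge_weights t) -> uniq (leaves t) ->
  a \in leaves t -> b \in leaves t -> a != b -> 0 < dist t a b.
Proof.
elim: t => [c|w1 w2 t1 IH1 t2 IH2]; first by rewrite !inE => _ _ /eqP-> /eqP->; rewrite eqxx.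
move=> /= /and3P [w1_gt0 w2_gt0]; rewrite all_cat => /andP [e1 e2].
have [ld1 ld2] : (forall c, 0 <= leaf_depth t1 c) /\ (forall c, 0 <= leaf_depth t2 c).
  by split=> c; apply: leaf_depth_ge0; [apply: sub_all e1 | apply: sub_all e2] => w /ltW.
rewrite cat_uniq => /and3P [u1 _ u2] ta tb ab; rewrite (negbTE ab).
case: ifP => [/andP [a1 b1]|_]; first exact: IH1.
case: ifP => [/andP [a2 b2]|_]; first exact: IH2.
have ld_gt0 c : c \in leaves t1 ++ leaves t2 -> 0 < leaf_depth (WNode w1 w2 t1 t2) c.
  rewrite mem_cat /=; case: ifP => [_ _|_ /= ->]; exact: ltr_pwDl.
by rewrite addr_gt0 ?ld_gt0.
Qed.

Lemma size_vertices t : (size (vertices t)).+1 = (2 * NL t)%N.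
Proof.
rewrite /NL; elim: t => [c|w1 w2 t1 IH1 t2 IH2] //=.
by rewrite size_cat !size_map size_cat; lia.
Qed.

Lemma vertices_subtree t s : s \in vertices t -> exists u, subtree_at t s = Some u.
Proof.
elim: t s => [c|w1 w2 t1 IH1 t2 IH2] s /=; first by rewrite inE => /eqP->; exists (WLeaf c).
rewrite inE mem_cat => /or3P [/eqP->|/mapP [s' + ->]|/mapP [s' + ->]] /=.
- by exists (WNode w1 w2 t1 t2).
- exact: IH1.
- exact: IH2.
Qed.

End WeightedTrees.

Section Triples.
Variable n : nat.
Implicit Types (a b c x y : 'I_n) (C : seq 'I_n) (tr : triple n).

Definition tcomps tr : seq 'I_n := [:: (val tr).1.1; (val tr).1.2; (val tr).2].

Definition excluded tr (k : 'I_3) : 'I_n := nth (val tr).1.1 (tcomps tr) k.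

Definition triples_through x y C : {set triple n} :=
  [set tr | [exists c, (c \in C) && perm_eq (tcomps tr) [:: x; y; c]]].

Lemma triple_of_uniq a b c : uniq [:: a; b; c] ->
  exists tr, perm_eq (tcomps tr) [:: a; b; c].
Proof.
move=> abc_uniq; have perm_abc := permEl (perm_sort <=%O [:: a; b; c]).
have : sorted <%O (sort <=%O [:: a; b; c]).
  by rewrite lt_sorted_uniq_le (perm_uniq perm_abc) abc_uniq sort_sorted //; exact: le_total.
move: perm_abc (perm_size perm_abc).
case: (sort _ _) => [|x [|y [|z []]]] //= perm_xyz _ /and3P [xy yz _].
by exists (exist _ (x, y, z) (introT andP (conj xy yz))).
Qed.

Lemma card_triples_through x y C : uniq C -> x \notin C -> y \notin C -> x != y ->
  (size C <= #|triples_through x y C|)%N.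
Proof.
move=> C_uniq xC yC xy.
(* each triple of the set determines its third element c, the only one in C *)
pose third tr := head x [seq e <- tcomps tr | e \in C].
have third_eq tr c : c \in C -> perm_eq (tcomps tr) [:: x; y; c] -> third tr = c.
  move=> cC /(perm_filter (mem C)).
  have -> : [seq e <- [:: x; y; c] | e \in C] = [:: c].
    by rewrite /= (negbTE xC) (negbTE yC) cC.
  by move/perm_small_eq => /(_ isT); rewrite /third => ->.
rewrite -(card_uniqP C_uniq); apply: leq_trans (leq_imset_card third _).
apply/subset_leq_card/subsetP => c cC.
have [tr tr_xyc] : exists tr, perm_eq (tcomps tr) [:: x; y; c].
  have [xc yc] : x != c /\ y != c.
    by split; [apply: contraNneq xC => -> | apply: contraNneq yC => ->].
  by apply: triple_of_uniq; rewrite /= !inE negb_or xy xc yc.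
apply/imsetP; exists tr; last by rewrite (third_eq _ _ cC tr_xyc).
by rewrite inE; apply/existsP; exists c; rewrite cC tr_xyc.
Qed.

End Triples.

Section ExperimentProbabilities.
Variables (R : realType) (n : nat) (T : wtree R n).
Implicit Types (tr : triple n) (k : 'I_3).

Lemma qprob_ge0 tr k : (forall a b, 0 <= dist T a b) -> 0 <= qprob T tr k.
Proof.
move=> dist_ge0; rewrite /qprob.
by case: (val k) => [|[|?]]; rewrite divr_ge0 ?mulr_ge0 ?addr_ge0.
Qed.

Lemma qprob_sum1 tr : (forall a b, dist T a b = dist T b a) ->
  0 < dist T (val tr).1.1 (val tr).1.2 + dist T (val tr).1.2 (val tr).2
      + dist T (val tr).1.1 (val tr).2 ->
  \sum_k qprob T tr k = 1.
Proof.
case: tr => [[[a b] c] ?] dist_sym /= S_gt0.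
rewrite !big_ord_recr big_ord0 /qprob /= (dist_sym b a) (dist_sym c a) (dist_sym c b).
by field; rewrite gt_eqF.
Qed.

Lemma qprob_excluded_mean (P : pred 'I_n) h tr : count P (tcomps tr) = 1 -> 0 <= h ->
  (forall a b, a \in tcomps tr -> b \in tcomps tr -> a != b ->
     dist T a b = if P a || P b then 2 else 2 * h) ->
  \sum_k qprob T tr k * (P (excluded tr k))%:R = (h + 2)^-1.
Proof.
case: tr => [[[a b] c] /= abc] count1 h_ge0 dist_abc; have /andP [ab bc] := abc.
have [a_b b_c a_c] : [/\ a != b, b != c & a != c].
  by split; apply/eqP => /(congr1 val) /=; lia.
rewrite !big_ord_recr big_ord0 /qprob /excluded /tcomps /=.
rewrite !dist_abc ?inE ?eqxx ?orbT // 1?eq_sym //.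
move: count1; rewrite /tcomps /=.
by case: (P a); case: (P b); case: (P c) => //= _; field; lra.
Qed.

End ExperimentProbabilities.

Section Topologies.
Variable n : nat.

Fixpoint bleaves (t : btree n) : seq 'I_n :=
  match t with BLeaf a => [:: a] | BNode t1 t2 => bleaves t1 ++ bleaves t2 end.

Fixpoint bsubtree_at (t : btree n) (s : seq bool) : option (btree n) :=
  match s, t with
  | [::], _ => Some t
  | b :: s', BNode t1 t2 => bsubtree_at (if b then t2 else t1) s'
  | _ :: _, BLeaf _ => None
  end.

Fixpoint bleftmost (t : btree n) : 'I_n :=
  match t with BLeaf a => a | BNode t1 _ => bleftmost t1 end.

Lemma bleftmost_mem t : bleftmost t \in bleaves t.
Proof. by elim: t => [a|t1 IH1 t2 _] /=; rewrite ?mem_head // mem_cat IH1. Qed.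

Lemma bleaves_topology (R : realType) (t : wtree R n) : bleaves (topology t) = leaves t.
Proof. by elim: t => //= w1 w2 t1 -> t2 ->. Qed.

Lemma bsubtree_at_topology (R : realType) (t : wtree R n) s :
  bsubtree_at (topology t) s = omap (@topology R n) (subtree_at t s).
Proof. by elim: s t => [|[] s IH] [a|w1 w2 t1 t2] /=. Qed.

End Topologies.

Section Estimator.
Variables (R : realType) (n : nat).

Definition pair_freq (x y : 'I_n) (C : seq 'I_n) (f : outcomes n) : R :=
  (\sum_(tr in triples_through x y C) (excluded tr (f tr) \in C)%:R)
    / #|triples_through x y C|%:R.

Definition compute_light_tree (topo : btree n) (f : outcomes n) (s : seq bool) : R :=
  match topo, bsubtree_at topo s with
  | BNode _ rc, Some (BNode X Y) =>
      (pair_freq (bleftmost X) (bleftmost Y) (bleaves rc) f)^-1 - 2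
  | _, _ => 0
  end.

End Estimator.

Lemma inv_freq_error (R : realType) (h r t : R) : 0 <= h <= 1 -> 0 <= t <= 6^-1 ->
  `|r - (h + 2)^-1| <= t -> `|r^-1 - 2 - h| <= 18 * t.
Proof.
move=> /andP [h_ge0 h_le1] /andP [t_ge0 t_le]; set p := (h + 2)^-1.
have p_ge : 3^-1 <= p by rewrite lef_pV2 ?posrE; lra.
rewrite ler_norml => /andP [r_ge r_le].
have r_gt0 : 0 < r by apply: lt_le_trans (_ : 0 < 6^-1) _; lra.
have r_inv_le : r^-1 <= 6 by rewrite -[6]invrK lef_pV2 ?posrE ?invr_gt0 //; lra.
have -> : r^-1 - 2 - h = r^-1 * (h + 2) * (p - r).
  by rewrite /p; field; rewrite !gt_eqF //; lra.
have r_inv_ge0 : 0 <= r^-1 by rewrite invr_ge0 ltW.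
have pr_le : `|p - r| <= t by rewrite ler_norml; apply/andP; split; lra.
rewrite !normrM (ger0_norm r_inv_ge0) ger0_norm; last by lra.
apply: (@le_trans _ _ (6 * 3 * t)); last lra.
apply: ler_pM => //; first by rewrite mulr_ge0 //; lra.
by apply: ler_pM => //; lra.
Qed.

Section ValidTree.
Variables (R : realType) (n : nat) (T : wtree R n).
Hypotheses (n_ge2 : (2 <= n)%N) (T_valid : valid_tree 1 T).

Lemma valid_leaves_uniq : uniq (leaves T).
Proof. by case: T_valid => leaves_perm _ _ _; rewrite (perm_uniq leaves_perm) enum_uniq. Qed.

Lemma valid_mem_leaves a : a \in leaves T.
Proof. by case: T_valid => leaves_perm _ _ _; rewrite (perm_mem leaves_perm) mem_enum. Qed.

Lemma valid_NL : NL T = n.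
Proof.
by case: T_valid => leaves_perm _ _ _; rewrite /NL (perm_size leaves_perm) size_enum_ord.
Qed.

Lemma valid_equidistant : equidistant T 1.
Proof. by case: T_valid. Qed.

Lemma valid_edge_gt0 : all (> 0) (edge_weights T).
Proof.
case: T_valid => _ _ _; apply: sub_all => w; apply: lt_le_trans.
by rewrite mul1r divr_gt0 ?sqrtr_gt0 ?ln_gt0 ?ltr0n ?ltr1n //; lia.
Qed.

Lemma valid_dist_ge0 a b : 0 <= dist T a b.
Proof. by apply: dist_ge0; apply: sub_all valid_edge_gt0 => w /ltW. Qed.

Lemma valid_qprob_ge0 tr k : 0 <= qprob T tr k.
Proof. exact: qprob_ge0 valid_dist_ge0. Qed.

Lemma valid_qprob_sum1 tr : \sum_k qprob T tr k = 1.
Proof.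
apply: qprob_sum1; first exact: dist_sym.
case: tr => [[[a b] c] /= abc]; have /andP [ab _] := abc.
have a_b : a != b by apply/eqP => /(congr1 val) /=; lia.
have := dist_gt0 valid_edge_gt0 valid_leaves_uniq
  (valid_mem_leaves a) (valid_mem_leaves b) a_b.
by have := valid_dist_ge0 b c; have := valid_dist_ge0 a c; lra.
Qed.

End ValidTree.

Section ValidNode.
Variables (R : realType) (n : nat) (w1 w2 : R) (t1 t2 : wtree R n).
Local Notation T := (WNode w1 w2 t1 t2).
Hypotheses (n_ge2 : (2 <= n)%N) (T_valid : valid_tree 1 T).

Lemma lc_rc_disjoint a : a \in leaves t1 -> a \notin leaves t2.
Proof.
have := valid_leaves_uniq T_valid; rewrite /= cat_uniq => /and3P [_ /hasPn disj _].
by move=> a1; apply: contraL a1 => /disj.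
Qed.

Lemma NL_rc_ge_half : (n <= 2 * NL t2)%N.
Proof.
have := valid_NL T_valid; case: T_valid => _ /= /andP [NL_le _] _ _.
by rewrite /NL /= size_cat; rewrite /NL in NL_le; lia.
Qed.

Lemma size_lc_vertices : (size (lc_vertices T) <= n)%N.
Proof.
have := valid_NL T_valid; have := size_vertices t1; have := NL_rc_ge_half.
by rewrite /lc_vertices size_map /NL /= size_cat; lia.
Qed.

Lemma lc_pair_leaves s v1 v2 x y x0 y0 :
  subtree_at t1 s = Some (WNode v1 v2 x y) -> x0 \in leaves x -> y0 \in leaves y ->
  [/\ x0 \in leaves t1, y0 \in leaves t1 & x0 != y0].
Proof.
move=> su x0x y0y; have := subtree_uniq su.
have uniq_t1 : uniq (leaves t1).
  by have := valid_leaves_uniq T_valid; rewrite /= cat_uniq => /and3P [].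
move=> /(_ uniq_t1); rewrite /= cat_uniq => /and3P [_ /hasPn disj _].
split; try by apply: (subtree_leaves su); rewrite /= mem_cat ?x0x ?y0y ?orbT.
by apply: contraTneq x0x => ->; exact: disj.
Qed.

Lemma lc_hv_bounds s v1 v2 x y x0 y0 :
  subtree_at t1 s = Some (WNode v1 v2 x y) -> x0 \in leaves x -> y0 \in leaves y ->
  0 <= hv (WNode v1 v2 x y) <= 1.
Proof.
move=> su x0x y0y; have su' : subtree_at T (false :: s) = Some (WNode v1 v2 x y) := su.
have [uniq_T eq_T] := (valid_leaves_uniq T_valid, valid_equidistant T_valid).
apply/andP; split.
  have := valid_dist_ge0 n_ge2 T_valid x0 y0.
  by rewrite (dist_split su' uniq_T eq_T x0x y0y); lra.
apply: hv_subtree_le eq_T su'.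
by apply: sub_all (valid_edge_gt0 n_ge2 T_valid) => w /ltW.
Qed.

Lemma card_lc_triples_ge s v1 v2 x y x0 y0 :
  subtree_at t1 s = Some (WNode v1 v2 x y) -> x0 \in leaves x -> y0 \in leaves y ->
  n%:R / 2 <= #|triples_through x0 y0 (leaves t2)|%:R :> R.
Proof.
move=> su x0x y0y; have [x01 y01 x0_y0] := lc_pair_leaves su x0x y0y.
have uniq_t2 : uniq (leaves t2).
  by have := valid_leaves_uniq T_valid; rewrite /= cat_uniq => /and3P [].
have := card_triples_through uniq_t2 (lc_rc_disjoint x01) (lc_rc_disjoint y01) x0_y0.
rewrite /NL ler_pdivrMr // -natrM ler_nat mulnC => card_ge.
by rewrite (leq_trans NL_rc_ge_half) // leq_mul2l card_ge orbT.
Qed.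

Lemma excluded_rc_mean s v1 v2 x y x0 y0 tr :
  subtree_at t1 s = Some (WNode v1 v2 x y) -> x0 \in leaves x -> y0 \in leaves y ->
  tr \in triples_through x0 y0 (leaves t2) ->
  \sum_k qprob T tr k * (excluded tr k \in leaves t2)%:R = (hv (WNode v1 v2 x y) + 2)^-1.
Proof.
move=> su x0x y0y; rewrite inE => /existsP [c /andP [c2 perm_tr]].
have su' : subtree_at T (false :: s) = Some (WNode v1 v2 x y) := su.
have [uniq_T eq_T] := (valid_leaves_uniq T_valid, valid_equidistant T_valid).
have [x01 y01 _] := lc_pair_leaves su x0x y0y.
have d_xy := dist_split su' uniq_T eq_T x0x y0y.
have d_c a : a \in leaves t1 -> dist T a c = 2.
  move=> a1; rewrite (@dist_split _ _ T [::] w1 w2 t1 t2 1) //.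
  by rewrite (hv_equidistant eq_T) mulr1.
have [nx0 ny0] := (negbTE (lc_rc_disjoint x01), negbTE (lc_rc_disjoint y01)).
apply: (qprob_excluded_mean (P := fun a => a \in leaves t2)).
- by rewrite (permP perm_tr) /= nx0 ny0 c2.
- by case/andP: (lc_hv_bounds su x0x y0y).
move=> a b; cbv beta; rewrite !(perm_mem perm_tr) !inE.
by case/or3P => /eqP-> /or3P [] /eqP->; rewrite ?eqxx ?nx0 ?ny0 ?c2 // => _;
  rewrite ?d_xy ?d_c // dist_sym ?d_xy ?d_c.
Qed.

Lemma lc_vertex_error s t : s \in lc_vertices T -> 0 <= t <= 6^-1 ->
  Pr T (fun f => ~~ match subtree_at T s with
      | Some u => `|compute_light_tree R (topology T) f s - hv u| <= 18 * t
      | None => false end)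
    <= 2 * expR (- (n%:R * t ^+ 2 / 16)).
Proof.
move=> /mapP [s' /vertices_subtree [u su] ->] t_bd.
have su' : subtree_at T (false :: s') = Some u := su.
have err_ge0 : 0 <= 2 * expR (- (n%:R * t ^+ 2 / 16)) by rewrite mulr_ge0 ?expR_ge0.
rewrite su' /compute_light_tree /= bsubtree_at_topology su /=.
case: u su su' => [a|v1 v2 x y] su su' /=.
  by rewrite /Pr big_pred0 // => f; rewrite subrr normr0 mulr_ge0 //; lra.
rewrite !bleaves_topology.
set x0 := bleftmost _; set y0 := bleftmost _.
have [x0x y0y] : x0 \in leaves x /\ y0 \in leaves y.
  by rewrite -!bleaves_topology !bleftmost_mem.
set A := triples_through x0 y0 (leaves t2).
have mean := excluded_rc_mean su x0x y0y.
have h_bd := lc_hv_bounds su x0x y0y; have [h_ge0 h_le1] := andP h_bd.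
set h := hv _ in mean h_bd h_ge0 h_le1 *.
have A_large : n%:R / 2 <= #|A|%:R :> R := card_lc_triples_ge su x0x y0y.
have A_gt0 : 0 < #|A|%:R :> R.
  by apply: lt_le_trans A_large; rewrite divr_gt0 // ltr0n; lia.
set p := (h + 2)^-1.
have p_bd : 0 <= p <= 1 by rewrite invr_ge0 invf_le1; [apply/andP; split|]; lra.
pose Y tr k := (excluded tr k \in leaves t2)%:R - p.
have Y_bd tr k : -1 <= Y tr k <= 1 by rewrite /Y; case: (_ \in _) => /=; lra.
have Y_mean tr : tr \in A -> \sum_k qprob T tr k * Y tr k = 0.
  move=> trA; under eq_bigr do rewrite mulrBr.
  by rewrite sumrB mean // -mulr_suml valid_qprob_sum1 // mul1r subrr.
have t_le2 : 0 <= t <= 2 by lra.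
have [q_ge0 q_sum1] := (valid_qprob_ge0 n_ge2 T_valid, valid_qprob_sum1 n_ge2 T_valid).
apply: le_trans (le_trans _ (chernoff q_ge0 q_sum1 Y_bd Y_mean t_le2)) _.
  apply: (prob_le q_ge0) => f bad; rewrite leNgt; move: bad; apply: contra => dev_lt.
  apply: inv_freq_error h_bd t_bd _.
  have -> : pair_freq R x0 y0 (leaves t2) f - p = (\sum_(tr in A) Y tr (f tr)) / #|A|%:R.
    by rewrite /Y sumrB sumr_const /pair_freq -/A; field; rewrite gt_eqF.
  by rewrite normrM normfV (gtr0_norm A_gt0) ler_pdivrMr // mulrC ltW.
rewrite ler_wpM2l // ler_expR lerN2.
rewrite (_ : n%:R * t ^+ 2 / 16 = n%:R / 2 * (t ^+ 2 / 8)); last by field.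
by rewrite -[leRHS]mulrA ler_wpM2r // divr_ge0 ?sqr_ge0.
Qed.

End ValidNode.

Section Rates.
Variables (R : realType) (n : nat).
Local Notation L := (ln (n%:R : R)).

Lemma sqrt_ln_div_le : (2592 ^ 2 <= n)%N -> Num.sqrt (L / n%:R) <= 36^-1.
Proof.
move=> n_large; set r := Num.sqrt (n%:R : R).
(* ln n = 2 ln r < 2 r, so ln n / n < 2 / r <= 36^-2 *)
have n_gt0 : 0 < n%:R :> R by rewrite ltr0n; lia.
have r2 : r ^+ 2 = n%:R by rewrite sqr_sqrtr ?ltW.
have r_large : 2592 <= r.
  by rewrite -(@ler_pXn2r _ 2) ?nnegrE ?sqrtr_ge0 // r2 -natrX ler_nat.
have L_lt : L < 2 * r.
  rewrite -r2 lnXn ?sqrtr_gt0 // mulr2n.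
  by have := @ln_sublinear R r; rewrite sqrtr_gt0 => /(_ n_gt0); lra.
have L_ge0 : 0 <= L by rewrite ln_ge0 // ler1n; lia.
rewrite -(@ler_pXn2r _ 2) ?nnegrE ?sqrtr_ge0 ?invr_ge0 // sqr_sqrtr ?divr_ge0 //.
rewrite ler_pdivrMr // -[X in _ <= _ * X]r2.
have : 0 <= r * (r - 2592) by rewrite mulr_ge0 ?sqrtr_ge0 ?subr_ge0.
rewrite expr2; nra.
Qed.

Lemma expR_vertex_error_le : (1 < n)%N ->
  expR (- (n%:R * (6 * Num.sqrt (L / n%:R)) ^+ 2 / 16)) <= n%:R ^- 2.
Proof.
move=> n_gt1; have n_gt0 : 0 < n%:R :> R by rewrite ltr0n; lia.
have L_gt0 : 0 < L by rewrite ln_gt0 // ltr1n.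
rewrite exprMn sqr_sqrtr; last by rewrite divr_ge0 ?ltW.
apply: (@le_trans _ _ (expR (- (2%:R * L)))).
  rewrite ler_expR lerN2.
  have -> : n%:R * (6 ^+ 2 * (L / n%:R)) / 16 = 9 / 4 * L by field; rewrite gt_eqF.
  lra.
by rewrite expRN expRM_natl lnK ?posrE.
Qed.

End Rates.

Section Correctness.
Variables (R : realType) (n : nat) (w1 w2 : R) (t1 t2 : wtree R n).
Local Notation T := (WNode w1 w2 t1 t2).
Hypotheses (n_large : (2592 ^ 2 <= n)%N) (T_valid : valid_tree 1 T).

Lemma compute_light_tree_error :
  1 - 2 / n%:R <=
  Pr T (fun f => all (fun s =>
      match subtree_at T s with
      | Some u => `|compute_light_tree R (topology T) f s - hv u|
                    <= 18 * 6 * Num.sqrt (ln n%:R / n%:R)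
      | None => false
      end) (lc_vertices T)).
Proof.
have n_gt1 : (1 < n)%N by apply: leq_trans n_large.
have n_gt0 : 0 < n%:R :> R by rewrite ltr0n; lia.
rewrite -mulrA; set t := 6 * Num.sqrt _.
have t_bd : 0 <= t <= 6^-1.
  have := sqrt_ln_div_le R n_large; have := sqrtr_ge0 (ln n%:R / n%:R : R).
  by rewrite /t => *; apply/andP; split; lra.
have [q_ge0 q_sum1] := (valid_qprob_ge0 n_gt1 T_valid, valid_qprob_sum1 n_gt1 T_valid).
apply: le_trans (prob_all_ge q_ge0 q_sum1 _ _).
rewrite lerD2l lerN2.
apply: (@le_trans _ _ (\sum_(s <- lc_vertices T) 2 * expR (- (n%:R * t ^+ 2 / 16)))).
  rewrite big_seq [leRHS]big_seq; apply: ler_sum => s s_lc.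
  exact (lc_vertex_error n_gt1 T_valid s_lc t_bd).
rewrite big_const_seq count_predT iter_addr_0 -[_ *+ size _]mulr_natr.
have vertex_err : expR (- (n%:R * t ^+ 2 / 16)) <= n%:R ^- 2 := expR_vertex_error_le R n_gt1.
apply: (@le_trans _ _ (2 * n%:R ^- 2 * n%:R)).
  apply: ler_pM; rewrite ?mulr_ge0 ?expR_ge0 ?ler_wpM2l ?ler_nat //.
  exact: size_lc_vertices T_valid.
by rewrite -mulrA expr2 invfM mulfVK ?gt_eqF.
Qed.

End Correctness.

Theorem lemma5 (R : realType) :
  exists tau : R, 0 < tau /\
  exists est : forall n : nat, btree n -> outcomes n -> seq bool -> R,
  exists C : R, 0 < C /\
  forall eps : R, 0 < eps ->
  exists N : nat, forall n : nat, (N <= n)%N ->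
  forall T : wtree R n, valid_tree tau T ->
    1 - eps <=
    Pr T (fun f : outcomes n =>
      all (fun s : seq bool =>
        match subtree_at T s with
        | Some u => `| est n (topology T) f s - hv u |
                      <= C * Num.sqrt (ln (n%:R) / n%:R)
        | None => false
        end) (lc_vertices T)).
Proof.
exists 1; split => //; exists (compute_light_tree R), (18 * 6).
split => [|eps eps_gt0]; first by rewrite mulr_gt0.
exists (maxn (2592 ^ 2) (Num.Def.archi_bound (2 / eps))) => n.
rewrite geq_max => /andP [n_large n_eps] [a|w1 w2 t1 t2] T_valid.
  by have := valid_NL T_valid; rewrite /NL /=; lia.
apply: le_trans (compute_light_tree_error n_large T_valid); rewrite lerD2l lerN2.
have n_gt0 : 0 < n%:R :> R by rewrite ltr0n; lia.
rewrite ler_pdivrMr // mulrC -ler_pdivrMr //; apply: ltW.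
by apply: lt_le_trans (archi_boundP _) _; rewrite ?ler_nat ?divr_ge0 //; lra.
Qed.
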